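(* For each $N$, let $\Psi=[\psi_1,\dots,\psi_N]$ be an orthonormal basis of $\mathbb{R}^N$, let $T\subseteq\{1,\dots,N\}$ be a fixed index set with $|T|=K$, and let $w\in\mathbb{R}^N$ have i.i.d. entries with zero mean and zero median, $\mathbb{E}|w_1|=\mu$, $\mathbb{E}[w_1^2]=\sigma^2$, where $\mu,\sigma^2>0$ are constants not depending on $N$. Assume $\|\psi_k\|_1=O(\log N)$ and $\|\psi_k\|_\infty=o(1)$ uniformly over $k\in T$, and $\|w\|_\infty=O(1)$ (the entries are bounded by a constant independent of $N$). Let $\epsilon>0$ and $\Delta_{\mathrm{W}}=\epsilon\left\|\sum_{k\in T}\psi_k\psi_k^Tw\right\|_1$. Then $\lim_{N\to\infty}\Pr\left(\Delta_{\mathrm{W}}\le O(K\,\mathrm{polylog}(N))\right)=1$, i.e. there is a bound of the form $O(K\,\mathrm{polylog}(N))$ that $\Delta_{\mathrm{W}}$ satisfies with probability tending to $1$.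
   Context: Asymptotic notation: $f=O(g)$ if $|f/g|<C$ for some constant $C>0$; $f=o(g)$ if $|f/g|\to0$; $\mathrm{polylog}(N)$ denotes a polynomial in $\log N$. Without defense the corresponding distortion is $\epsilon\|w\|_1=\Theta(N)$. *)

From HB Require Import structures.
From mathcomp Require Import all_boot all_order all_algebra.
From mathcomp Require Import all_classical all_reals all_analysis.
Set Implicit Arguments. Unset Strict Implicit. Unset Printing Implicit Defensive.
Import Order.TTheory GRing.Theory Num.Theory.
Local Open Scope classical_set_scope.
Local Open Scope ring_scope.

Definition prob {d} {T : measurableType d} {R : realType}
  (P : probability T R) (A : set T) : R := fine (P A).

(* Mutual independence of the family (X i)_{i < n}: the joint law is the
   product of the marginals on all measurable rectangles (taking A i = setT
   recovers every finite subfamily). *)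
Definition mutually_independent {d} {T : measurableType d} {R : realType}
  (P : probability T R) (n : nat) (X : 'I_n -> T -> R) : Prop :=
  forall A : 'I_n -> set R, (forall i, measurable (A i)) ->
    prob P (\big[setI/setT]_(i < n) (X i @^-1` A i))
    = \prod_(i < n) prob P (X i @^-1` A i).

Definition identically_distributed {d} {T : measurableType d} {R : realType}
  (P : probability T R) (n : nat) (X : 'I_n -> T -> R) : Prop :=
  forall i j (A : set R), measurable A ->
    P (X i @^-1` A) = P (X j @^-1` A).

Definition zero_median {d} {T : measurableType d} {R : realType}
  (P : probability T R) (Y : T -> R) : Prop :=
  prob P [set x | Y x <= 0] >= 2^-1 /\ prob P [set x | Y x >= 0] >= 2^-1.

Definition col_norm1 {R : realType} {n : nat} (M : 'M[R]_n) (k : 'I_n) : R :=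
  \sum_(i < n) `|M i k|.
Definition col_normInf {R : realType} {n : nat} (M : 'M[R]_n) (k : 'I_n) : R :=
  \big[Num.max/0]_(i < n) `|M i k|.

Definition DeltaW {R : realType} {n : nat} (eps : R) (Psi : 'M[R]_n)
  (T : {set 'I_n}) (w : 'I_n -> R) : R :=
  eps * \sum_(j < n) `| \sum_(k in T) Psi j k * (\sum_(i < n) Psi i k * w i) |.

(* The bound holds surely, not merely with probability tending to 1.  By
   Hoelder, |psi_k^T w| <= ||psi_k||_1 ||w||_inf, so the triangle inequality
   gives ||sum_(k in T) psi_k psi_k^T w||_1 <= sum_(k in T) ||psi_k||_1^2 ||w||_inf
   = O(K log^2 N). *)
From HB Require Import structures.
From mathcomp Require Import all_boot all_order all_algebra.
From mathcomp Require Import all_classical all_reals all_analysis.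
From mathcomp Require Import ring.
Import Order.TTheory GRing.Theory Num.Theory numFieldNormedType.Exports.
Set Implicit Arguments. Unset Strict Implicit. Unset Printing Implicit Defensive.
Local Open Scope classical_set_scope.
Local Open Scope ring_scope.

Lemma col_norm1_ge0 (R : realType) (n : nat) (Psi : 'M[R]_n) (k : 'I_n) :
  0 <= col_norm1 Psi k.
Proof. by apply: sumr_ge0 => i _. Qed.

Section DeltaW_bound.
Variables (R : realType) (n : nat) (Psi : 'M[R]_n) (w : 'I_n -> R) (B : R).
Hypothesis w_le : forall i, `|w i| <= B.

Lemma norm_col_dot_le (k : 'I_n) :
  `|\sum_(i < n) Psi i k * w i| <= col_norm1 Psi k * B.
Proof.
apply: le_trans (ler_norm_sum _ _ _) _; rewrite /col_norm1 mulr_suml.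
by apply: ler_sum => i _; rewrite normrM ler_wpM2l.
Qed.

Lemma DeltaW_le_sum (eps : R) (T : {set 'I_n}) : 0 <= eps ->
  DeltaW eps Psi T w <= eps * \sum_(k in T) col_norm1 Psi k ^+ 2 * B.
Proof.
move=> eps_ge0; apply: ler_wpM2l => //.
have norm_sum_le j : `|\sum_(k in T) Psi j k * \sum_(i < n) Psi i k * w i|
    <= \sum_(k in T) `|Psi j k| * (col_norm1 Psi k * B).
  apply: le_trans (ler_norm_sum _ _ _) _.
  by apply: ler_sum => k _; rewrite normrM ler_wpM2l ?norm_col_dot_le.
apply: le_trans (ler_sum _ (fun j _ => norm_sum_le j)) _.
rewrite exchange_big /=; apply: ler_sum => k _.
by rewrite -mulr_suml -/(col_norm1 Psi k) expr2 mulrA.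
Qed.

Lemma DeltaW_le (eps L : R) (T : {set 'I_n}) : 0 <= eps -> 0 <= B ->
  (forall k, k \in T -> col_norm1 Psi k <= L) ->
  DeltaW eps Psi T w <= eps * B * #|T|%:R * L ^+ 2.
Proof.
move=> eps_ge0 B_ge0 col_le; apply: le_trans (DeltaW_le_sum T eps_ge0) _.
have -> : eps * B * #|T|%:R * L ^+ 2 = eps * \sum_(k in T) L ^+ 2 * B.
  by rewrite sumr_const -mulr_natl; ring.
apply: ler_wpM2l => //; apply: ler_sum => k kT.
have col_ge0 := col_norm1_ge0 Psi k.
rewrite ler_wpM2r //; apply: lerXn2r; rewrite ?nnegrE ?col_le //.
exact: le_trans col_ge0 (col_le k kT).
Qed.

End DeltaW_bound.

Lemma prob_eventually_sure_cvg1 (R : realType) (d : measure_display)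
  (Omega : measurableType d) (P : nat -> probability Omega R)
  (E : nat -> set Omega) :
  (\forall N \near \oo, E N = setT) ->
  (fun N => prob (P N) (E N)) @ \oo --> (1 : R^o).
Proof.
move=> E_setT.
have prob_E_eq1 : \forall N \near \oo, (fun=> (1 : R^o)) N = prob (P N) (E N).
  by apply: filterS E_setT => N ->; rewrite /prob probability_setT.
exact: cvg_trans (near_eq_cvg prob_E_eq1) (cvg_cst _).
Qed.

Theorem theorem2 (R : realType) (d : measure_display) (Omega : measurableType d)
  (P : nat -> probability Omega R)
  (Psi : forall N : nat, 'M[R]_N)
  (Tset : forall N : nat, {set 'I_N})
  (w : forall N : nat, 'I_N -> Omega -> R)
  (mu sigma2 eps : R) :
  0 < mu -> 0 < sigma2 -> 0 < eps ->
  (* Psi is an orthonormal basis of R^N (columns psi_k) *)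
  (forall N, (Psi N)^T *m Psi N = 1%:M) ->
  (* i.i.d. entries *)
  (forall N i, measurable_fun setT (w N i)) ->
  (forall N, mutually_independent (P N) (w N)) ->
  (forall N, identically_distributed (P N) (w N)) ->
  (* zero mean, zero median, E|w_1| = mu, E[w_1^2] = sigma^2 *)
  (forall N i, (\int[P N]_x (w N i x)%:E = 0)%E) ->
  (forall N i, zero_median (P N) (w N i)) ->
  (forall N i, (\int[P N]_x (`|w N i x|)%:E = mu%:E)%E) ->
  (forall N i, (\int[P N]_x ((w N i x) ^+ 2)%:E = sigma2%:E)%E) ->
  (* ||psi_k||_1 = O(log N) uniformly over k in T *)
  (exists C : R, 0 < C /\ \forall N \near \oo,
      forall k, k \in Tset N -> col_norm1 (Psi N) k <= C * ln N%:R) ->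
  (* ||psi_k||_inf = o(1) uniformly over k in T *)
  (forall e : R, 0 < e -> \forall N \near \oo,
      forall k, k \in Tset N -> col_normInf (Psi N) k <= e) ->
  (* ||w||_inf = O(1) *)
  (exists B : R, forall N i x, `|w N i x| <= B) ->
  exists (C : R) (p : nat), 0 < C /\
    (fun N => prob (P N)
       [set x | DeltaW eps (Psi N) (Tset N) (fun i => w N i x)
                <= C * (#|Tset N|)%:R * (ln N%:R) ^+ p])
      @ \oo --> (1 : R^o).
Proof.
move=> _ _ eps_gt0 _ _ _ _ _ _ _ _ [C [C_gt0 col_le]] _ [B w_le].
have w_le_normB N i x : `|w N i x| <= `|B| by apply: le_trans (w_le N i x) (ler_norm B).
exists (eps * `|B| * C ^+ 2 + 1), 2%N; split.
  apply: ltr_wpDl => //; apply/mulr_ge0/exprn_ge0/ltW => //.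
  by apply/mulr_ge0/normr_ge0/ltW.
apply: prob_eventually_sure_cvg1; near=> N.
apply/seteqP; split => // x _ /=.
have col_le_N : forall k, k \in Tset N -> col_norm1 (Psi N) k <= C * ln N%:R.
  by near: N; exact: col_le.
apply: le_trans (DeltaW_le (w_le_normB N ^~ x) (ltW eps_gt0) (normr_ge0 B) col_le_N) _.
have -> : eps * `|B| * #|Tset N|%:R * (C * ln N%:R) ^+ 2
         = eps * `|B| * C ^+ 2 * #|Tset N|%:R * ln N%:R ^+ 2 by ring.
by rewrite ler_wpM2r ?sqr_ge0 // ler_wpM2r // lerDl.
Unshelve. all: by end_near.
Qed.
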